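(* Let $\Bbbk$ be a field and $G$ a finite abelian group, written as $G=G_1\oplus\cdots\oplus G_p$ with each $G_i$ a finite cyclic group. Then $\operatorname{Frobdim}(\Bbbk G)=\prod_{i=1}^p|G_i|$.
   Context: $\Bbbk G$ is the group algebra. A nearly Frobenius coproduct on a $\Bbbk$-algebra $A$ is a $\Bbbk$-linear map $\Delta:A\to A\otimes_\Bbbk A$ that is an $A$-bimodule morphism, i.e. $\Delta(ab)=(a\otimes 1)\Delta(b)=\Delta(a)(1\otimes b)$ for all $a,b\in A$. The Frobenius space of $A$ is the vector space of all such coproducts, and $\operatorname{Frobdim}A$ is its dimension over $\Bbbk$. *)

From HB Require Import structures.
From mathcomp Require Import all_boot all_order all_algebra all_fingroup all_solvable.
Set Implicit Arguments. Unset Strict Implicit. Unset Printing Implicit Defensive.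
Import GRing.Theory.
Local Open Scope ring_scope.

(* The group algebra kG of a finite group (type) gT over a field k is modelled
   as the k-vector space of functions gT -> k (coefficients on the basis g),
   with the convolution product.  kG (x) kG is modelled as k[G x G], i.e.
   functions gT * gT -> k, via (a (x) b)(g,h) = a g * b h. *)

Section GroupAlgebra.
Variables (k : fieldType) (gT : finGroupType).

Definition gAlg := {ffun gT -> k^o}.
Definition gAlg2 := {ffun (gT * gT) -> k^o}.

Definition gbasis (g : gT) : gAlg := [ffun x => (x == g)%:R].

Definition gmul (a b : gAlg) : gAlg :=
  [ffun g => \sum_(h : gT) a h * b ((h^-1 * g)%g)].

Definition gone : gAlg := gbasis 1%g.

(* (a (x) 1) * t  in kG (x) kG *)
Definition lact (a : gAlg) (t : gAlg2) : gAlg2 :=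
  [ffun gh : gT * gT => \sum_(x : gT) a x * t ((x^-1 * gh.1)%g, gh.2)].

(* t * (1 (x) b)  in kG (x) kG *)
Definition ract (t : gAlg2) (b : gAlg) : gAlg2 :=
  [ffun gh : gT * gT => \sum_(y : gT) t (gh.1, y) * b ((y^-1 * gh.2)%g)].

Definition nearly_frobenius (D : 'Hom(gAlg, gAlg2)) : Prop :=
  forall a b : gAlg, D (gmul a b) = lact a (D b) /\ D (gmul a b) = ract (D a) b.

Definition Frobdim_is (n : nat) : Prop :=
  exists V : {vspace 'Hom(gAlg, gAlg2)},
    (forall D, D \in V <-> nearly_frobenius D) /\ \dim V = n.

End GroupAlgebra.

From Pilot Require Import Defs.
From HB Require Import structures.
From mathcomp Require Import all_boot all_order all_algebra all_fingroup all_solvable.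
Import GRing.Theory.
Local Open Scope ring_scope.

(* A nearly Frobenius coproduct D is determined by t = D 1, since
   D a = (a (x) 1) t = t (1 (x) a).  Comparing the two expressions at a = g
   shows that the coefficient of x (x) y in t only depends on y x, so
   t = sum_u f(u) sum_x x (x) u x^-1 for some f : G -> k; conversely every f
   gives a coproduct.  Hence Frobdim kG = |G| for every finite group G, and
   |G| is the product of the orders of the cyclic factors. *)

Section GroupAlgebraCoproducts.
Variables (k : fieldType) (gT : finGroupType).
Local Notation A := (gAlg k gT).
Local Notation A2 := (gAlg2 k gT).
Local Notation one := (gone k gT).

Lemma sum_delta_mulr (F : gT -> k) g : \sum_w (w == g)%:R * F w = F g.
Proof.
rewrite (bigD1 g) //= eqxx mul1r big1 ?addr0 // => w /negbTE ->.
by rewrite mul0r.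
Qed.

Lemma gmul1r (a : A) : gmul one a = a.
Proof.
apply/ffunP=> g; rewrite ffunE.
under eq_bigr do rewrite ffunE.
by rewrite sum_delta_mulr invg1 mul1g.
Qed.

Lemma gmulr1 (a : A) : gmul a one = a.
Proof.
apply/ffunP=> g; rewrite ffunE -[RHS]sum_delta_mulr.
apply: eq_bigr => h _; rewrite ffunE mulrC; congr (_%:R * _).
by rewrite -(inj_eq (mulgI h)) mulgA mulgV mul1g mulg1 eq_sym.
Qed.

Lemma lact_gbasis g (t : A2) (x y : gT) :
  lact (gbasis k g) t (x, y) = t (g^-1 * x, y)%g.
Proof.
rewrite ffunE /=; under eq_bigr do rewrite ffunE.
exact: sum_delta_mulr.
Qed.

Lemma ract_gbasis g (t : A2) (x y : gT) :
  Defs.ract t (gbasis k g) (x, y) = t (x, y * g^-1)%g.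
Proof.
rewrite ffunE /= -(sum_delta_mulr (fun u => t (x, u))); apply: eq_bigr => u _.
rewrite ffunE mulrC; congr ((nat_of_bool _)%:R * _); apply/eqP/eqP=> [<- | ->].
  by rewrite invMg invgK mulKVg.
by rewrite invMg invgK mulgKV.
Qed.

Definition frob_coprod (f : A) (a : A) : A2 :=
  [ffun xy : gT * gT => \sum_(z : gT) a z * f (xy.2 * z^-1 * xy.1)%g].

Lemma frob_coprod_is_linear f : linear (frob_coprod f).
Proof.
move=> c a b; apply/ffunP=> xy; rewrite !ffunE scaler_sumr -big_split /=.
by apply: eq_bigr => z _; rewrite !ffunE mulrDl scalerAl.
Qed.
HB.instance Definition _ f :=
  GRing.isLinear.Build k A A2 *:%R (frob_coprod f) (frob_coprod_is_linear f).

Definition frob_coprodl (f : A) : 'Hom(A, A2) := linfun (frob_coprod f).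

Lemma frob_coprodl_is_linear : linear frob_coprodl.
Proof.
move=> c f g; apply/lfunP=> a; rewrite !lfunE /= !lfunE /= !lfunE /=.
apply/ffunP=> xy; rewrite !ffunE scaler_sumr -big_split /=.
by apply: eq_bigr => z _; rewrite !ffunE mulrDr -scalerAr.
Qed.
HB.instance Definition _ :=
  GRing.isLinear.Build k A 'Hom(A, A2) *:%R frob_coprodl frob_coprodl_is_linear.

Lemma frob_coprodl_one f y : frob_coprodl f one (1, y)%g = f y.
Proof.
rewrite lfunE /= ffunE /=; under eq_bigr do rewrite ffunE.
by rewrite sum_delta_mulr invg1 !mulg1.
Qed.

Lemma frob_coprodl_inj : injective frob_coprodl.
Proof.
move=> f g eq_fg; apply/ffunP=> y.
by rewrite -!frob_coprodl_one eq_fg.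
Qed.

Lemma frob_coprodl_nearly_frobenius f : nearly_frobenius (frob_coprodl f).
Proof.
move=> a b; rewrite !lfunE /=; split; apply/ffunP=> -[x y]; rewrite !ffunE /=.
- under eq_bigr do rewrite ffunE mulr_suml.
  rewrite exchange_big /=; apply: eq_bigr => h _; rewrite ffunE big_distrr /=.
  rewrite (reindex_inj (mulgI h)) /=; apply: eq_bigr => z _.
  by rewrite mulgA mulVg mul1g invMg !mulgA mulrA.
- under eq_bigr do rewrite ffunE mulr_suml.
  under [RHS]eq_bigr do rewrite ffunE mulr_suml.
  rewrite exchange_big [RHS]exchange_big /=; apply: eq_bigr => h _.
  rewrite (reindex_inj (mulgI h)) /=.
  have inj_yV : injective (fun v : gT => y * v^-1)%g.
    by move=> u v /mulgI /invg_inj.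
  rewrite [RHS](reindex_inj inj_yV) /=; apply: eq_bigr => z _.
  rewrite mulKg !invMg invgK mulgKV !mulgA.
  by rewrite -!mulrA [b z * _]mulrC.
Qed.

Section NearlyFrobenius.
Variable D : 'Hom(A, A2).
Hypothesis nfD : nearly_frobenius D.
Local Notation t := (D one).

Lemma nearly_frobenius_lact a : D a = lact a t.
Proof. by rewrite -{1}(gmulr1 a); case: (nfD a one). Qed.

Lemma nearly_frobenius_ract a : D a = Defs.ract t a.
Proof. by rewrite -{1}(gmul1r a); case: (nfD one a). Qed.

Lemma nearly_frobenius_unit_balanced x y : t (x, y) = t (1, y * x)%g.
Proof.
have := congr1 (fun u : A2 => u (x, y * x)%g)
  (etrans (esym (nearly_frobenius_lact (gbasis k x)))
          (nearly_frobenius_ract (gbasis k x))).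
by rewrite lact_gbasis ract_gbasis mulVg mulgK.
Qed.

Lemma nearly_frobenius_coprodl :
  D = frob_coprodl [ffun y : gT => t (1%g, y)].
Proof.
apply/lfunP => a; rewrite lfunE /= nearly_frobenius_lact.
apply/ffunP => -[x y]; rewrite !ffunE /=.
by apply: eq_bigr => z _; rewrite nearly_frobenius_unit_balanced ffunE mulgA.
Qed.

End NearlyFrobenius.

Theorem Frobdim_group_algebra : Frobdim_is k gT #|gT|.
Proof.
exists (limg (linfun frob_coprodl)); split.
  move=> D; split.
    by case/memv_imgP=> f _ ->; rewrite lfunE; apply: frob_coprodl_nearly_frobenius.
  move/nearly_frobenius_coprodl=> ->; apply/memv_imgP.
  by exists [ffun y => D one (1%g, y)]; rewrite ?memvf ?lfunE.
have /eqP ker0 : lker (linfun frob_coprodl) == 0%VS.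
  by apply/lker0P=> f g; rewrite !lfunE; apply: frob_coprodl_inj.
by rewrite limg_dim_eq ?ker0 ?capv0 // dimvf /dim /= muln1.
Qed.

End GroupAlgebraCoproducts.

Theorem corollary11 (k : fieldType) (gT : finGroupType) (p : nat)
    (Gi : 'I_p -> {group gT}) :
  abelian [set: gT] ->
  (forall i, cyclic (Gi i)) ->
  \big[dprod/1%g]_(i < p) (Gi i) = [set: gT] ->
  Frobdim_is k gT (\prod_(i < p) #|Gi i|)%N.
Proof.
move=> _ _ defG; rewrite (bigdprod_card defG) cardsT.
exact: Frobdim_group_algebra.
Qed.
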